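(* Let $n\geq3$, let $o_1,o_2$ be two non-parallel $\mathcal{O}_n$-directions, write $o_1=\alpha+\beta\zeta_n$, $o_2=\gamma+\delta\zeta_n$ with $\alpha,\beta,\gamma,\delta\in\mathbb{Z}[\zeta_n+\bar\zeta_n]$, and let $M_{\{o_1,o_2\}}=\operatorname{lin}_{\mathbb{Z}[\zeta_n+\bar\zeta_n]}\left(\left\{\frac{o_1}{\alpha\delta-\beta\gamma},\frac{o_2}{\alpha\delta-\beta\gamma}\right\}\right)$. Then $\mathcal{O}_n$ is a subgroup of $M_{\{o_1,o_2\}}$ and the subgroup index $[M_{\{o_1,o_2\}}:\mathcal{O}_n]$ is finite. Hence there are $c\in\mathbb{N}$ and $t_1,\dots,t_c\in M_{\{o_1,o_2\}}$, where one may take $t_1=0$, such that $M_{\{o_1,o_2\}}=\dot{\bigcup}_{i=1}^c(t_i+\mathcal{O}_n)$ (disjoint union), and consequently every subset $G\subset M_{\{o_1,o_2\}}$ satisfies $G=\dot{\bigcup}_{i=1}^c\bigl(G\cap(t_i+\mathcal{O}_n)\bigr)$.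
   Context: $\zeta_n$ is a primitive $n$th root of unity in $\mathbb{C}$, $\bar\zeta_n$ its complex conjugate, $\mathcal{O}_n=\mathbb{Z}[\zeta_n]$. An $\mathcal{O}_n$-direction is an element of $\mathcal{O}_n\setminus\{0\}$. The coefficients $\alpha,\beta,\gamma,\delta$ are uniquely determined, and $\alpha\delta-\beta\gamma\ne0$. $\operatorname{lin}_R(S)$ is the set of $R$-linear combinations of elements of $S$. *)

From HB Require Import structures.
From mathcomp Require Import all_boot all_order all_algebra all_field.
Set Implicit Arguments. Unset Strict Implicit. Unset Printing Implicit Defensive.
Import Order.TTheory GRing.Theory Num.Theory.
Local Open Scope ring_scope.

(* We work in algC, the algebraic complex numbers (all numbers involved are
   algebraic).  z plays the role of the primitive n-th root of unity zeta_n. *)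

(* O_n = Z[z] : values at z of polynomials with integer coefficients. *)
Definition inO (z x : algC) : Prop :=
  exists p : {poly int}, x = (map_poly intr p).[z].

Definition inZr (z x : algC) : Prop :=
  exists p : {poly int}, x = (map_poly intr p).[z + z^*].

Definition parallel (o1 o2 : algC) : Prop :=
  exists r : algC, r \is Num.real /\ o1 = r * o2.

Definition inM (z o1 o2 D x : algC) : Prop :=
  exists a b : algC, [/\ inZr z a, inZr z b & x = a * (o1 / D) + b * (o2 / D)].

From HB Require Import structures.
From mathcomp Require Import all_boot all_order all_algebra all_field.
From mathcomp Require Import ring.
From Stdlib Require Import Classical.
Import Order.TTheory GRing.Theory Num.Theory.
Local Open Scope ring_scope.
Set Implicit Arguments. Unset Strict Implicit.

(* Since z^2 = (z + z^* ) z - 1, every element of Z[z] is a + b z with a, b in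
   Z[z + z^*]; Cramer's rule expresses it through o1 / D and o2 / D, and D != 0
   because o1 and o2 are not parallel.  Conversely D is a nonzero algebraic
   integer of Z[z], so the constant term of its minimal polynomial yields N > 0
   with N / D in Z[z], whence N M is contained in Z[z].  As Z[z] is spanned over
   Z by 1, z, ..., z^(n-1), every class of M modulo Z[z] contains one of the
   finitely many sums \sum_k (f_k / N) z^k with 0 <= f_k < N, and choosing one
   element of M in each class that meets M gives the coset representatives. *)

Section IntegerPolynomialValues.
Variable w : algC.

Lemma inO_ind (S : algC -> Prop) :
  (forall c : int, S c%:~R) -> (forall x (c : int), S x -> S (x * w + c%:~R)) ->
  forall x, inO w x -> S x.
Proof.
move=> S_int S_step x [p ->]; elim/poly_ind: p => [|p c IHp].
  by rewrite map_poly0 horner0; apply: (S_int 0).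
rewrite rmorphD rmorphM /= map_polyX map_polyC hornerD hornerMX hornerC.
exact: S_step.
Qed.

Lemma inO_int (c : int) : inO w c%:~R.
Proof. by exists c%:P; rewrite map_polyC hornerC. Qed.

Lemma inO0 : inO w 0.
Proof. exact: (inO_int 0). Qed.

Lemma inO_exp k : inO w (w ^+ k).
Proof. by exists 'X^k; rewrite map_polyXn hornerXn. Qed.

Lemma inO_add x y : inO w x -> inO w y -> inO w (x + y).
Proof. by move=> [p ->] [q ->]; exists (p + q); rewrite rmorphD hornerD. Qed.

Lemma inO_opp x : inO w x -> inO w (- x).
Proof. by move=> [p ->]; exists (- p); rewrite rmorphN hornerN. Qed.

Lemma inO_sub x y : inO w x -> inO w y -> inO w (x - y).
Proof. by move=> Ox Oy; apply: inO_add Ox (inO_opp Oy). Qed.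

Lemma inO_mul x y : inO w x -> inO w y -> inO w (x * y).
Proof. by move=> [p ->] [q ->]; exists (p * q); rewrite rmorphM hornerM. Qed.

Lemma inO_sub_sym x y : inO w (x - y) -> inO w (y - x).
Proof. by move=> Oxy; rewrite -opprB; apply: inO_opp. Qed.

Lemma inO_sub_trans x y u : inO w (x - y) -> inO w (y - u) -> inO w (x - u).
Proof. by move=> Oxy Oyu; rewrite -[x - u](subrKA y); apply: inO_add. Qed.

Lemma inO_sum (I : Type) (r : seq I) (P : pred I) (F : I -> algC) :
  (forall i, P i -> inO w (F i)) -> inO w (\sum_(i <- r | P i) F i).
Proof. by move=> OF; apply: big_ind => //; [apply: inO0 | apply: inO_add]. Qed.

Lemma inO_real : w \is Num.real -> forall x, inO w x -> x \is Num.real.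
Proof.
by move=> w_real; apply: inO_ind => [c | x c x_real]; rewrite ?realD ?realM ?realz.
Qed.

Lemma inO_Aint : w \in Aint -> forall x, inO w x -> x \in Aint.
Proof.
by move=> Aw; apply: inO_ind => [c | x c Ax]; rewrite ?rpredD ?rpredM ?Aint_int.
Qed.

End IntegerPolynomialValues.

Lemma inO_trans w v x : inO w v -> inO v x -> inO w x.
Proof.
move=> Ov; apply: inO_ind => [c | y c Oy]; first exact: inO_int.
by apply/inO_add/inO_int; apply: inO_mul.
Qed.

Lemma inO_quadratic_decomp z w x : z ^+ 2 = w * z - 1 -> inO z x ->
  exists a b, [/\ inO w a, inO w b & x = a + b * z].
Proof.
move=> z2; move: x; apply: inO_ind => [c | y c [a [b [Oa Ob ->]]]].
  by exists c%:~R, 0; rewrite mul0r addr0; split; [apply: inO_int | apply: inO0 |].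
exists (c%:~R - b), (a + b * w); split.
- by apply/inO_sub/Ob; apply: inO_int.
- by apply/inO_add/inO_mul/(inO_exp w 1).
- by rewrite mulrDl -mulrA -expr2 z2; ring.
Qed.

Lemma prim_root_mul_conj n (z : algC) : n.-primitive_root z -> z * z^* = 1.
Proof.
move=> prim_z; have n_gt0 := prim_order_gt0 prim_z.
have norm_z : `|z| = 1.
  by apply/eqP; rewrite -(pexpr_eq1 n_gt0) // -normrX prim_expr_order ?normr1.
by rewrite -normCK norm_z expr1n.
Qed.

Lemma inO_add_conj_prim_root n (z : algC) : n.-primitive_root z -> inO z (z + z^*).
Proof.
move=> prim_z; have n_gt0 := prim_order_gt0 prim_z.
have -> : z^* = z ^+ n.-1.
  apply: (@mulfI _ z); first by rewrite (prim_root_eq0 prim_z) -lt0n.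
  by rewrite (prim_root_mul_conj prim_z) -exprS prednK // prim_expr_order.
exact/inO_add/inO_exp/(inO_exp z 1).
Qed.

Lemma parallel_of_det_eq0 (z al be ga de : algC) :
  [/\ al \is Num.real, be \is Num.real, ga \is Num.real & de \is Num.real] ->
  ga + de * z != 0 -> al * de = be * ga -> parallel (al + be * z) (ga + de * z).
Proof.
move=> [al_real be_real ga_real de_real] o2_neq0 det0.
have [ga0 | ga_neq0] := eqVneq ga 0.
  have de_neq0 : de != 0 by apply: contraNneq o2_neq0 => ->; rewrite ga0 mul0r addr0.
  have /eqP : al * de = 0 by rewrite det0 ga0 mulr0.
  rewrite mulf_eq0 (negbTE de_neq0) orbF => /eqP al0.
  exists (be / de); split; first by rewrite realM ?realV.
  by rewrite al0 ga0 !add0r mulrA divfK.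
exists (al / ga); split; first by rewrite realM ?realV.
by rewrite mulrDr divfK // mulrA [al / ga * de]mulrAC det0 mulfK.
Qed.

Lemma int_root_div D (p : {poly int}) : D != 0 -> p != 0 ->
  root (map_poly intr p) D -> exists2 m : int, m != 0 & inO D (m%:~R / D).
Proof.
move=> D_neq0; elim/poly_ind: p => [|p c IHp]; first by rewrite eqxx.
have [-> | c_neq0] := eqVneq c 0.
  rewrite polyC0 addr0 rmorphM /= map_polyX rootM rootX (negbTE D_neq0) orbF => pX_neq0.
  by apply: IHp; apply: contraNneq pX_neq0 => ->; rewrite mul0r.
move=> _; rewrite rootE rmorphD rmorphM /= map_polyX map_polyC hornerD hornerMX hornerC.
rewrite addr_eq0 => /eqP pD; exists c => //.
have -> : c%:~R / D = - (map_poly intr p).[D] by rewrite -[c%:~R]opprK -pD mulNr mulfK.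
by apply: inO_opp; exists p.
Qed.

Lemma Aint_nat_div D : D \in Aint -> D != 0 ->
  exists2 N : nat, (0 < N)%N & inO D (N%:R / D).
Proof.
move=> AD D_neq0; have [p Dp] := floorpP AD.
have p_neq0 : p != 0.
  have : minCpoly D != 0 by rewrite minCpoly_eq0.
  by rewrite Dp; apply: contraNneq => ->; rewrite map_poly0.
have root_p : root (map_poly intr p) D by rewrite -Dp root_minCpoly.
have [m m_neq0 Om] := int_root_div D_neq0 p_neq0 root_p.
exists `|m|%N; first by rewrite absz_gt0.
rewrite -[_%:R]/((`|m|%N : int)%:~R) abszEsg intrM -mulrA.
exact/inO_mul/Om/inO_int.
Qed.

Lemma inO_unity_root_coef n (z : algC) y : (0 < n)%N -> z ^+ n = 1 -> inO z y ->
  exists c : 'I_n -> int, y = \sum_(k < n) (c k)%:~R * z ^+ k.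
Proof.
move=> n_gt0 zn [p ->].
pose q : {poly int} := 'X^n - 1%:P.
have q_monic : q \is monic := monicXnsubC 1 n_gt0.
have qz : (map_poly intr q).[z] = 0 :> algC.
  by rewrite rmorphB /= map_polyXn map_polyC hornerD hornerN hornerXn hornerC zn subrr.
rewrite (Pdiv.IdomainMonic.divp_eq q_monic p) rmorphD rmorphM hornerD hornerM qz.
rewrite mulr0 add0r.
have size_r : (size (map_poly (intr : int -> algC) (p %% q)) <= n)%N.
  rewrite size_map_inj_poly ?rmorph0 //; last exact: intr_inj.
  by rewrite -ltnS -(size_XnsubC (1 : int) n_gt0) ltn_modpN0 ?monic_neq0.
exists (fun k => (p %% q)`_k); rewrite (horner_coef_wide _ size_r).
by apply: eq_bigr => k _; rewrite coef_map.
Qed.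

Lemma inO_scaled_finite_cover n (z : algC) N : (0 < n)%N -> z ^+ n = 1 -> (0 < N)%N ->
  exists L : seq algC, forall x, inO z (N%:R * x) -> exists2 l, l \in L & inO z (x - l).
Proof.
move=> n_gt0 zn N_gt0.
pose frac (f : {ffun 'I_n -> 'I_N}) := \sum_(k < n) (f k)%:R / N%:R * z ^+ k.
exists [seq frac f | f : {ffun 'I_n -> 'I_N}] => x /(inO_unity_root_coef n_gt0 zn) [c Nx].
have N_gtz : (0 < N%:Z) by rewrite ltz_nat.
have mod_ge0 k : 0 <= (c k %% N)%Z by rewrite modz_ge0 // gt_eqF.
have mod_lt k : (`|(c k %% N)%Z| < N)%N by rewrite -ltz_nat gez0_abs ?ltz_pmod.
pose f : {ffun 'I_n -> 'I_N} := [ffun k => Ordinal (mod_lt k)].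
exists (frac f); first by rewrite map_f ?mem_enum.
have N_neq0 : N%:R != 0 :> algC by rewrite pnatr_eq0 -lt0n.
have f_mod k : (f k)%:R = (c k %% N)%Z%:~R :> algC.
  by rewrite ffunE /= natr_absz ger0_norm.
have -> : x = \sum_(k < n) (c k)%:~R / N%:R * z ^+ k.
  apply: (mulfI N_neq0); rewrite Nx mulr_sumr; apply: eq_bigr => k _.
  by rewrite mulrA mulrCA divff ?mulr1.
rewrite /frac -sumrB; apply: inO_sum => k _.
have div_mod : (c k)%:~R - (f k)%:R = (c k %/ N)%Z%:~R * N%:R :> algC.
  by rewrite f_mod {1}(divz_eq (c k) N) intrD intrM addrK.
by rewrite -!mulrBl div_mod mulfK //; apply: inO_mul; [apply: inO_int | apply: inO_exp].
Qed.

Section Transversal.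
Variables (T : eqType) (x0 : T) (R : T -> T -> Prop) (P : T -> Prop).
Hypotheses (R_sym : forall a b, R a b -> R b a)
  (R_trans : forall a b c, R a b -> R b c -> R a c) (P_x0 : P x0).

Lemma transversal_seq (L : seq T) : exists s : seq T,
  [/\ forall i, (i < size (x0 :: s))%N -> P (nth x0 (x0 :: s) i),
      forall i j, (i < size (x0 :: s))%N -> (j < size (x0 :: s))%N ->
        R (nth x0 (x0 :: s) i) (nth x0 (x0 :: s) j) -> i = j
    & forall x, x \in L -> forall y, P y -> R y x ->
        exists2 i, (i < size (x0 :: s))%N & R y (nth x0 (x0 :: s) i)].
Proof.
elim: L => [|a L [s [Pt Rt covL]]].
  exists [::]; split=> //; first by case.
  by case=> [|i] [|j].
set t := x0 :: s in Pt Rt covL.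
have [[y [Py Rya new_y]] | no_new] := classic
    (exists y, [/\ P y, R y a & forall i, (i < size t)%N -> ~ R y (nth x0 t i)]).
  exists (rcons s y); rewrite -rcons_cons -/t size_rcons; split.
  - move=> i; rewrite ltnS leq_eqVlt nth_rcons => /predU1P[-> | lt_it].
      by rewrite ltnn eqxx.
    by rewrite lt_it; apply: Pt.
  - move=> i j; rewrite !ltnS !nth_rcons leq_eqVlt => /predU1P[-> | lt_it].
      rewrite leq_eqVlt => /predU1P[-> // | lt_jt].
      by rewrite ltnn eqxx lt_jt => /new_y.
    rewrite lt_it leq_eqVlt => /predU1P[-> | lt_jt].
      by rewrite ltnn eqxx => /R_sym /new_y.
    by rewrite lt_jt; apply: Rt.
  - move=> x; rewrite inE => /predU1P[-> y' Py' Ry'a | xL y' Py' Ry'x].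
      exists (size t); rewrite ?nth_rcons ?ltnn ?eqxx //.
      exact: R_trans Ry'a (R_sym Rya).
    have [i lt_it Ry'i] := covL x xL y' Py' Ry'x.
    by exists i; rewrite ?nth_rcons ?lt_it // ltnW.
exists s; split => // x; rewrite inE => /predU1P[-> y Py Rya | ]; last exact: covL.
apply: NNPP => no_rep; apply: no_new; exists y; split => // i lt_it Ryi.
by apply: no_rep; exists i.
Qed.

Lemma finite_transversal (L : seq T) :
  (forall y, P y -> exists2 x, x \in L & R y x) ->
  exists c (t : 'I_c.+1 -> T), [/\ forall i, P (t i), t ord0 = x0,
    forall i j, R (t i) (t j) -> i = j & forall y, P y -> exists i, R y (t i)].
Proof.
move=> coverL; have [s [Pt Rt covL]] := transversal_seq L.
exists (size s), (fun i => nth x0 (x0 :: s) i); split=> //.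
- by move=> i; apply: Pt.
- by move=> i j /Rt Rij; apply: val_inj; apply: Rij.
- move=> y Py; have [x xL Ryx] := coverL y Py.
  have [i lt_is Ryi] := covL x xL y Py Ryx.
  by exists (Ordinal lt_is).
Qed.

End Transversal.

(* [inZr z] unfolds to [inO (z + z^* )], so the [inO] lemmas apply to it as they are. *)
Lemma inM_lincomb (z al be ga de a b : algC) : al * de - be * ga != 0 ->
  [/\ inZr z al, inZr z be, inZr z ga & inZr z de] -> inZr z a -> inZr z b ->
  inM z (al + be * z) (ga + de * z) (al * de - be * ga) (a + b * z).
Proof.
move=> D_neq0 [Zal Zbe Zga Zde] Za Zb.
exists (a * de - b * ga), (b * al - a * be); split.
- by apply: inO_sub; apply: inO_mul.
- by apply: inO_sub; apply: inO_mul.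
- by field.
Qed.

Lemma inM_scaled_inO (z o1 o2 D N x : algC) :
  inO z (z + z^*) -> inO z o1 -> inO z o2 -> inO z (N / D) -> inM z o1 o2 D x ->
  inO z (N * x).
Proof.
move=> Ow Oo1 Oo2 ON [a [b [Za Zb ->]]].
have -> : N * (a * (o1 / D) + b * (o2 / D)) = a * o1 * (N / D) + b * o2 * (N / D) by ring.
by apply: inO_add; apply: inO_mul => //; apply: inO_mul => //; apply: inO_trans Ow _.
Qed.

Theorem lemma5p5 (n : nat) (z : algC) (o1 o2 al be ga de : algC) :
  (3 <= n)%N -> n.-primitive_root z ->
  inO z o1 -> o1 != 0 -> inO z o2 -> o2 != 0 -> ~ parallel o1 o2 ->
  inZr z al -> inZr z be -> inZr z ga -> inZr z de ->
  o1 = al + be * z -> o2 = ga + de * z ->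
  let D := al * de - be * ga in
  (* O_n is a subgroup of M (M is an additive group by construction) *)
  (forall x, inO z x -> inM z o1 o2 D x) /\
  (* finite index: a finite system of coset representatives, t_1 = 0 *)
  exists c : nat, exists t : 'I_c.+1 -> algC,
    [/\ (forall i, inM z o1 o2 D (t i)),
        t ord0 = 0,
        (forall i j, inO z (t i - t j) -> i = j),
        (forall x, inM z o1 o2 D x -> exists i, inO z (x - t i)) &
        (forall G : algC -> Prop, (forall x, G x -> inM z o1 o2 D x) ->
           forall x, G x <->
             (exists i, G x /\ inO z (x - t i)) /\
             (forall i j, G x -> inO z (x - t i) -> inO z (x - t j) -> i = j))].
Proof.
move=> _ prim_z Oo1 _ Oo2 o2_neq0 not_par Zal Zbe Zga Zde o1E o2E D; subst o1 o2.
have n_gt0 : (0 < n)%N := prim_order_gt0 prim_z.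
have Ow : inO z (z + z^*) := inO_add_conj_prim_root prim_z.
have real_w : z + z^* \is Num.real by apply/CrealP; rewrite rmorphD /= conjCK addrC.
have D_neq0 : D != 0.
  apply: contra_not_neq not_par => /subr0_eq det0.
  by apply: parallel_of_det_eq0 o2_neq0 det0; split; apply: inO_real real_w _ _.
have z_sq : z ^+ 2 = (z + z^*) * z - 1.
  by rewrite mulrDl [z^* * z]mulrC (prim_root_mul_conj prim_z) expr2 addrK.
have OM x : inO z x -> inM z (al + be * z) (ga + de * z) D x.
  by case/(inO_quadratic_decomp z_sq)=> [a [b [Za Zb ->]]]; apply: inM_lincomb.
split=> //.
have OD : inO z D by apply: inO_sub; apply: inO_mul; apply: inO_trans Ow _.
have [N N_gt0 ON] := Aint_nat_div (inO_Aint (Aint_prim_root prim_z) OD) D_neq0.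
have [L coverL] := inO_scaled_finite_cover n_gt0 (prim_expr_order prim_z) N_gt0.
have coverM y : inM z (al + be * z) (ga + de * z) D y ->
    exists2 l, l \in L & inO z (y - l).
  by move=> My; apply: coverL; apply: inM_scaled_inO Ow Oo1 Oo2 (inO_trans OD ON) My.
have [c [t [Mt t0 t_inj t_cover]]] :=
  finite_transversal (@inO_sub_sym z) (@inO_sub_trans z) (OM 0 (inO0 z)) coverM.
exists c, t; split=> // G GM x; split=> [Gx | [[i [Gx _]] _] //].
split=> [|i j _ Oi Oj]; first by have [i Oi] := t_cover x (GM x Gx); exists i.
exact: t_inj (inO_sub_trans (inO_sub_sym Oi) Oj).
Qed.
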